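(* Let $n\ge 2$ and let $m,p,k$ be integers with $1\le m\le p\le n$, $1\le k\le n$ and $m<n$. The number of $\alpha\in\mathcal{ODCT}_n$ with $h(\alpha)=p$, $w^+(\alpha)=k$ and $f(\alpha)=m$ is $$F(n;p,k,m)=\begin{cases}\binom{n-m-1}{p-m}, & p=k,\\ 0, & p\ne k.\end{cases}$$
   Context: $X_n=\{1,2,\dots,n\}$ with its usual order; maps are written on the right ($x\alpha$). A map $\alpha:X_n\to X_n$ is order-preserving if $x\le y$ implies $x\alpha\le y\alpha$, order-decreasing if $x\alpha\le x$ for all $x$, and a contraction if $|x\alpha-y\alpha|\le|x-y|$ for all $x,y$. $\mathcal{ODCT}_n$ is the set of all maps $X_n\to X_n$ (defined on all of $X_n$) that are order-preserving, order-decreasing contractions. Height $h(\alpha)=|\mathrm{Im}\,\alpha|$; right waist $w^+(\alpha)=\max(\mathrm{Im}\,\alpha)$; fix $f(\alpha)=|\{x\in X_n:x\alpha=x\}|$. Binomial coefficients $\binom{a}{b}$ with $b>a\ge0$ are $0$. *)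

From mathcomp Require Import all_boot.
Set Implicit Arguments. Unset Strict Implicit. Unset Printing Implicit Defensive.

(* X_n = {1,...,n} is modelled by 'I_n, the element i : 'I_n standing for i+1.
   Maps X_n -> X_n are finite functions {ffun 'I_n -> 'I_n}. *)

Definition absdist (a b : nat) : nat := (a - b) + (b - a).

Definition order_preserving n (al : {ffun 'I_n -> 'I_n}) : bool :=
  [forall x : 'I_n, forall y : 'I_n, (x <= y) ==> (al x <= al y)].

Definition order_decreasing n (al : {ffun 'I_n -> 'I_n}) : bool :=
  [forall x : 'I_n, al x <= x].

Definition contraction n (al : {ffun 'I_n -> 'I_n}) : bool :=
  [forall x : 'I_n, forall y : 'I_n, absdist (al x) (al y) <= absdist x y].

Definition ODCT n (al : {ffun 'I_n -> 'I_n}) : bool :=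
  [&& order_preserving al, order_decreasing al & contraction al].

Definition height n (al : {ffun 'I_n -> 'I_n}) : nat := #|[set al x | x : 'I_n]|.

(* right waist w+(al) = max Im al, as an element of {1..n} (hence the +1) *)
Definition rwaist n (al : {ffun 'I_n -> 'I_n}) : nat := \max_(x : 'I_n) (val (al x)).+1.

Definition fixcount n (al : {ffun 'I_n -> 'I_n}) : nat := #|[set x : 'I_n | al x == x]|.

From mathcomp Require Import all_boot zify.
Set Implicit Arguments. Unset Strict Implicit. Unset Printing Implicit Defensive.

(* An order-preserving,
   order-decreasing contraction al satisfies al 0 = 0 and
   al (x+1) - al x \in {0,1}, so it is the prefix-sum map
   x |-> #{j < x | c j} of its step sequence c j = [al (j+1) != al j];
   conversely, the prefix-sum map of every bit sequence is such a map.
   For the prefix-sum map of c: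
   - the image is the initial segment {0,...,S} with S = #{j < n-1 | c j},
     so height and right waist both equal S+1 (hence the count is 0 if p <> k);
   - x is fixed iff c j holds for all j < x, so the fixed points form an
     initial segment, and there are exactly m < n of them iff c is 1 on
     [0, m-1) and 0 at m-1.
   The maps counted are thus encoded by the free bits c_m, ..., c_{n-2},
   i.e. by subsets of an (n-m-1)-element set, of size p-m; card_draws
   then yields the binomial coefficient. *)

Definition psum (c : nat -> bool) (x : nat) : nat := \sum_(j < x) c j.

Implicit Types c : nat -> bool.

Lemma psum0 c : psum c 0 = 0. Proof. by rewrite /psum big_ord0. Qed.

Lemma psumS c x : psum c x.+1 = psum c x + c x.
Proof. by rewrite /psum big_ord_recr. Qed.

Lemma psum_le c x : psum c x <= x.
Proof.
elim: x => [|x IH]; first by rewrite psum0.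
by rewrite psumS; case: (c x) => /=; lia.
Qed.

(* Prefix sums are monotone and grow at most by the length of the interval:
   this is why prefix-sum maps are order-preserving contractions. *)
Lemma psum_incr c x y : x <= y -> psum c x <= psum c y <= psum c x + (y - x).
Proof.
move=> le_xy; have [d ->] : exists d, y = x + d by exists (y - x); lia.
rewrite addKn; elim: d => [|d IH]; first by rewrite !addn0 leqnn.
by rewrite addnS psumS; case: (c _) => /=; lia.
Qed.

Lemma psum_idP c x : reflect (forall j, j < x -> c j) (psum c x == x).
Proof.
apply: (iffP eqP).
  elim: x => [_ [] // | x IH]; rewrite psumS => e j; have := psum_le c x.
  move=> le_x; rewrite ltnS leq_eqVlt => /orP[/eqP->|lt_jx].
    by case: (c x) e => /=; lia.
  by apply: IH lt_jx; case: (c x) e => /=; lia.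
elim: x => [_ | x IH all_c]; first exact: psum0.
by rewrite psumS IH ?all_c ?addn1 // => j lt_jx; apply: all_c; lia.
Qed.

Lemma psum_onto c x y : y <= psum c x -> exists2 z, z <= x & psum c z = y.
Proof.
elim: x y => [|x IH] y.
  by rewrite psum0 leqn0 => /eqP->; exists 0; rewrite ?psum0.
rewrite psumS => le_y; case: (leqP y (psum c x)) => [/IH[z le_zx <-]|lt_y].
  by exists z => //; lia.
by exists x.+1; rewrite ?psumS //; case: (c x) le_y lt_y => /=; lia.
Qed.

Lemma card_below N v : v <= N -> #|[set y : 'I_N | y < v]| = v.
Proof.
move=> le_vN; have -> : [set y : 'I_N | y < v] = [set widen_ord le_vN y | y : 'I_v].
  apply/setP=> y; rewrite inE; apply/idP/imsetP => [lt_yv|[z _ ->] /=].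
    by exists (Ordinal lt_yv) => //; apply: val_inj.
  exact: ltn_ord.
rewrite card_imset ?card_ord // => a b /(congr1 val) eq_ab.
exact: val_inj.
Qed.

Lemma downclosed_below N (P : {set 'I_N}) :
  (forall x y : 'I_N, x <= y -> y \in P -> x \in P) ->
  forall x : 'I_N, (x \in P) = (x < #|P|).
Proof.
move=> down x; apply/idP/idP => [Px|].
  rewrite -[x.+1](card_below (ltn_ord x)); apply/subset_leq_card/subsetP => y.
  by rewrite inE ltnS => le_yx; apply: down le_yx Px.
apply: contraLR => nPx; rewrite -leqNgt -[X in _ <= X](card_below (ltnW (ltn_ord x))).
apply/subset_leq_card/subsetP => y Py; rewrite inE ltnNge.
by apply: contra nPx => le_xy; apply: down le_xy Py.
Qed.

Section StepMaps.
Variable n' : nat.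
Local Notation n := n'.+1.
Implicit Types al : {ffun 'I_n -> 'I_n}.

Definition stepmap c : {ffun 'I_n -> 'I_n} := [ffun x : 'I_n => inord (psum c x)].

Definition at_nat al (x : nat) : nat := al (inord x).
Definition steps al (j : nat) : bool := at_nat al j.+1 != at_nat al j.

Lemma stepmapE c (x : 'I_n) : stepmap c x = psum c x :> nat.
Proof. by rewrite ffunE inordK // (leq_ltn_trans (psum_le c x)). Qed.

Lemma at_nat_stepmap c x : x <= n' -> at_nat (stepmap c) x = psum c x.
Proof. by move=> le_x; rewrite /at_nat stepmapE inordK. Qed.

Lemma stepmap_ODCT c : ODCT (stepmap c).
Proof.
apply/and3P; split.
- apply/forallP => x; apply/forallP => y; apply/implyP => le_xy.
  by rewrite !stepmapE; case/andP: (psum_incr c le_xy).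
- by apply/forallP => x; rewrite stepmapE psum_le.
- apply/forallP => x; apply/forallP => y; rewrite /absdist !stepmapE.
  by case: (leqP x y) => [|/ltnW] /(psum_incr c); lia.
Qed.

Lemma steps_stepmap c j : j < n' -> steps (stepmap c) j = c j.
Proof.
move=> lt_j; rewrite /steps !at_nat_stepmap ?psumS 1?(ltnW lt_j) //.
case: (c j) => /=; last by rewrite addn0 eqxx.
by rewrite addn1 neq_ltn ltnSn orbT.
Qed.

Lemma ODCT_stepmap al : ODCT al -> al = stepmap (steps al).
Proof.
case/and3P => /forallP pres /forallP decr /forallP contr.
have at0 : at_nat al 0 = 0 by have := decr (inord 0); rewrite /at_nat inordK //; lia.
have mono x : x < n' -> at_nat al x <= at_nat al x.+1.
  move=> lt_x; move: (pres (inord x)) => /forallP/(_ (inord x.+1))/implyP.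
  by apply; rewrite !inordK //; lia.
have lip x : x < n' -> at_nat al x.+1 <= (at_nat al x).+1.
  move=> lt_x; have /forallP/(_ (inord x)) := contr (inord x.+1).
  by rewrite /absdist /at_nat !inordK //; lia.
have psum_steps x : x <= n' -> at_nat al x = psum (steps al) x.
  elim: x => [|x IH] le_x; first by rewrite at0 psum0.
  rewrite psumS -IH 1?ltnW // /steps.
  by case: eqP => [-> | ne]; [rewrite addn0 | have := mono x le_x; have := lip x le_x; lia].
apply/ffunP => x; apply: val_inj; rewrite /= stepmapE -psum_steps.
  by rewrite /at_nat inord_val.
by rewrite -ltnS.
Qed.

Lemma stepmap_ext c1 c2 : (forall j, j < n' -> c1 j = c2 j) -> stepmap c1 = stepmap c2.
Proof.
move=> eq_c; apply/ffunP => x; rewrite !ffunE; congr inord; apply: eq_bigr => j _.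
by rewrite eq_c // (leq_trans (ltn_ord j)) // -ltnS.
Qed.

Lemma image_stepmap c : [set stepmap c x | x : 'I_n] = [set y : 'I_n | y < (psum c n').+1].
Proof.
apply/setP => y; rewrite inE ltnS; apply/imsetP/idP => [[x _ ->]|].
  have le_x : x <= n' by rewrite -ltnS.
  by rewrite stepmapE; case/andP: (psum_incr c le_x).
case/psum_onto => z le_z e; exists (inord z) => //.
by apply: val_inj; rewrite /= stepmapE inordK.
Qed.

Lemma height_stepmap c : height (stepmap c) = (psum c n').+1.
Proof. by rewrite /height image_stepmap card_below // ltnS psum_le. Qed.

Lemma rwaist_stepmap c : rwaist (stepmap c) = (psum c n').+1.
Proof.
apply/eqP; rewrite eqn_leq; apply/andP; split.
  apply/bigmax_leqP => x _; have le_x : x <= n' by rewrite -ltnS.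
  by rewrite /= ltnS stepmapE; case/andP: (psum_incr c le_x).
by have := leq_bigmax (F := fun x : 'I_n => (val (stepmap c x)).+1) ord_max; rewrite /= stepmapE.
Qed.

Lemma ODCT_height_rwaist al : ODCT al -> height al = rwaist al.
Proof. by move/ODCT_stepmap->; rewrite height_stepmap rwaist_stepmap. Qed.

Lemma fixcount_stepmapP c m : 0 < m <= n' ->
  reflect ((forall j, j < m.-1 -> c j) /\ c m.-1 = false) (fixcount (stepmap c) == m).
Proof.
case/andP=> m_gt0 le_m; rewrite /fixcount; set P := [set x | _].
have inP (x : 'I_n) : (x \in P) = (psum c x == x) by rewrite inE -val_eqE /= stepmapE.
apply: (iffP eqP) => [card_P | [ones zero]].
  have down (x y : 'I_n) : x <= y -> y \in P -> x \in P.
    by rewrite !inP => le_xy /psum_idP all_y; apply/psum_idP => j lt_j; apply: all_y; lia.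
  have fixed x : x <= n' -> (psum c x == x) = (x < m).
    by move=> le_x; have := downclosed_below down (inord x); rewrite inP card_P inordK.
  split=> [j lt_j | ].
    have /psum_idP all_j : psum c j.+1 == j.+1 by rewrite fixed; lia.
    exact: all_j.
  have e1 : psum c m.-1 == m.-1 by rewrite fixed; lia.
  have e2 : psum c m != m by rewrite fixed ?ltnn.
  move: e2; rewrite -{1 2}(prednK m_gt0) psumS (eqP e1).
  by case: (c m.-1); rewrite ?addn1 ?eqxx.
have -> : P = [set x : 'I_n | x < m].
  apply/setP => x; rewrite inP inE; apply/psum_idP/idP => [all_x | lt_x j lt_j].
    by rewrite ltnNge; apply: contraFN zero => le_m'; apply: all_x; lia.
  by apply: ones; lia.
by rewrite card_below // ltnW.
Qed.

End StepMaps.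

Definition code m K (A : {set 'I_K}) (j : nat) : bool :=
  if j < m.-1 then true else if j == m.-1 then false
  else j - m \in [seq val i | i <- enum A].

Lemma code_shift m K (A : {set 'I_K}) (i : 'I_K) : 0 < m -> code m A (m + i) = (i \in A).
Proof.
move=> m_gt0; rewrite /code ifF; last by apply/negbTE; rewrite -leqNgt; lia.
by rewrite ifF ?addKn ?(mem_map val_inj) ?mem_enum //; apply/eqP; lia.
Qed.

Lemma psum_split c m d : psum c (m + d) = psum c m + \sum_(i < d) c (m + i).
Proof. by rewrite /psum big_split_ord. Qed.

Lemma psum_code n' m (A : {set 'I_(n' - m)}) :
  0 < m <= n' -> psum (code m A) n' = m.-1 + #|A|.
Proof.
case/andP=> m_gt0 le_m.
have -> : psum (code m A) n' = psum (code m A) (m + (n' - m)) by rewrite subnKC.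
rewrite psum_split; congr (_ + _).
  rewrite -[X in psum _ X](prednK m_gt0) psumS {2}/code ltnn eqxx addn0.
  by apply/eqP/psum_idP => j lt_j; rewrite /code lt_j.
rewrite -sum1_card [RHS]big_mkcond /=; apply: eq_bigr => i _.
by rewrite code_shift //; case: (i \in A).
Qed.

Lemma fixcount_code n' m (A : {set 'I_(n' - m)}) :
  0 < m <= n' -> fixcount (stepmap n' (code m A)) = m.
Proof.
move=> m_range; apply/eqP/fixcount_stepmapP => //.
by split=> [j lt_j | ]; rewrite /code ?lt_j // ltnn eqxx.
Qed.

Lemma ODCT_code n' m (al : {ffun 'I_n'.+1 -> 'I_n'.+1}) :
  0 < m <= n' -> ODCT al -> fixcount al = m ->
  al = stepmap n' (code m [set i : 'I_(n' - m) | steps al (m + i)]).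
Proof.
move=> m_range od fix_m.
have /(fixcount_stepmapP _ m_range) [ones zero] : fixcount (stepmap n' (steps al)) == m.
  by rewrite -ODCT_stepmap ?fix_m.
rewrite {1}(ODCT_stepmap od); apply: stepmap_ext => j lt_j.
rewrite /code; case: ifP => [/ones // | /negbT ge_j]; case: eqP => [-> // | ne_j].
have lt_jm : j - m < n' - m by lia.
by rewrite -[j - m]/(val (Ordinal lt_jm)) (mem_map val_inj) mem_enum inE /= subnKC //; lia.
Qed.

Lemma stepmap_code_inj n' m :
  0 < m -> injective (fun A : {set 'I_(n' - m)} => stepmap n' (code m A)).
Proof.
move=> m_gt0 A B /= eq_AB; apply/setP => i.
have lt_i : m + i < n' by have := ltn_ord i; lia.
rewrite -(code_shift A i m_gt0) -(code_shift B i m_gt0).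
by rewrite -(steps_stepmap (code m A) lt_i) eq_AB steps_stepmap.
Qed.

Lemma counted_maps n' m p : 0 < m <= n' -> m <= p ->
  [set al : {ffun 'I_n'.+1 -> 'I_n'.+1} |
     [&& ODCT al, height al == p, rwaist al == p & fixcount al == m]]
  = [set stepmap n' (code m A) | A in [set A : {set 'I_(n' - m)} | #|A| == p - m]].
Proof.
move=> m_range le_mp; apply/setP => al; rewrite inE; apply/and4P/imsetP.
  case=> od /eqP h_p _ /eqP fix_m; have al_code := ODCT_code m_range od fix_m.
  set A := [set i : 'I_(n' - m) | steps al (m + i)] in al_code *.
  exists A => //; rewrite inE; apply/eqP.
  by have := height_stepmap n' (code m A); rewrite -al_code h_p psum_code //; lia.
case=> A; rewrite inE => /eqP card_A ->.
rewrite stepmap_ODCT height_stepmap rwaist_stepmap psum_code // fixcount_code //.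
by split => //; apply/eqP; lia.
Qed.

Theorem proposition4p1 (n m p k : nat) :
  2 <= n -> 1 <= m -> m <= p -> p <= n -> 1 <= k -> k <= n -> m < n ->
  #|[set al : {ffun 'I_n -> 'I_n} |
      [&& ODCT al, height al == p, rwaist al == k & fixcount al == m]]|
  = if p == k then 'C(n - m - 1, p - m) else 0.
Proof.
move=> _ m_gt0 le_mp _ _ _ lt_mn.
case: n lt_mn => [// | n'] lt_mn; have m_range : 0 < m <= n' by lia.
case: eqVneq => [<- | ne_pk]; last first.
  apply/eqP; rewrite cards_eq0; apply/eqP/setP => al; rewrite !inE.
  apply/negbTE/and4P => -[/ODCT_height_rwaist h_eq /eqP h_p /eqP h_k _].
  by rewrite -h_p -h_k h_eq eqxx in ne_pk.
rewrite counted_maps // card_in_imset => [|A B _ _]; last exact: stepmap_code_inj.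
by rewrite card_draws card_ord; congr 'C(_, _); lia.
Qed.
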